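(* Let $q(m,n)=am^2+bmn+cn^2$ with $a,b,c\in\mathbb{Z}$ be an indefinite form whose discriminant $\Delta=b^2-4ac>0$ is not a perfect square, and let $\lambda>0$. For $k\in\mathbb{Z}$ let $A_k=\{(m,n)\in(\mathbb{Z}\setminus\{0\})\times\mathbb{Z}: q(m,n)=k\}$. Then there is a constant $C_\lambda$ depending only on $\lambda$ such that for every $k\in\mathbb{Z}$, $$\sum_{(m,n)\in A_k}\frac{1}{|m|^{\lambda}}\le C_{\lambda}\,\Delta^{(1+\lambda)/2}.$$ *)

From Stdlib Require Import Reals ZArith List.
Open Scope R_scope.

Definition qform (a b c m n : Z) : Z := (a*m*m + b*m*n + c*n*n)%Z.

Definition qdisc (a b c : Z) : Z := (b*b - 4*a*c)%Z.

Definition A_set (a b c k : Z) (p : Z * Z) : Prop :=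
  fst p <> 0%Z /\ qform a b c (fst p) (snd p) = k.

Definition list_sum (f : Z * Z -> R) (L : list (Z * Z)) : R :=
  fold_right (fun p acc => f p + acc) 0 L.

(* The (possibly infinite) sum of a nonnegative family f over the set P is
   bounded by B: by definition, the sum of a nonnegative family is the
   supremum of its finite partial sums, so this says every finite partial
   sum (over distinct elements of P) is at most B. *)
Definition nonneg_sum_le (P : Z * Z -> Prop) (f : Z * Z -> R) (B : R) : Prop :=
  forall L : list (Z * Z), NoDup L -> Forall P L -> list_sum f L <= B.

(* Reduce to a primitive form.  A representation (m, n) of k is g (m', n')
   with (m', n') primitive and representing k' = k / g^2, and the middle
   coefficient of the form in a unimodular basis starting with (m', n') is a
   square root of the discriminant D modulo 4|k'|.  Two representations with
   the same g, the same root modulo 2|k'| and the same signs of m and of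
   2cn + bm, whose |m| agree up to a factor 11/10, coincide: equal roots make
   k' divide their determinant, while both lie so close to the same asymptote
   of q = 0 that the determinant is smaller than |k|.  The square roots of D modulo N number
   at most d(N) sqrt(4D), so a range R <= |m| < 11R/10 contains at most
   4 d(|k|) d(4|k|) sqrt(4D) representations.  Summing |m|^-lam over the
   geometric ranges above (|k| / D^2)^(1/4), adding at most four
   representations below, and using d(n) = O(n^(lam/8)) gives the bound. *)

From Pilot Require Import Defs.
From Stdlib Require Import Reals ZArith List Lia Lra Znumtheory ClassicalEpsilon.
From mathcomp Require ssreflect ssrbool eqtype ssrnat seq div prime.
Import ListNotations.
Set Bullet Behavior "Strict Subproofs".

(** * Number of divisors *)

Module DivisorBound.
Import ssreflect ssrbool eqtype ssrnat seq div prime.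
Local Open Scope R_scope.

Lemma size_divisors_mul_pfactor (p e m : nat) : prime p -> coprime p m -> (0 < m)%N ->
  (size (divisors (m * p ^ e)) <= size (divisors m) * e.+1)%N.
Proof.
move=> pp cpm m0.
have pe0 : (0 < p ^ e)%N by rewrite expn_gt0 prime_gt0.
have n0 : (0 < m * p ^ e)%N by rewrite muln_gt0 m0.
rewrite -(size_iota 0 e.+1) -(size_allpairs (fun d j => (d * p ^ j)%N)).
apply: uniq_leq_size; first exact: divisors_uniq.
move=> d; rewrite -dvdn_divisors // => dn.
have d0 : (0 < d)%N by apply: dvdn_gt0 dn.
case: (pfactor_coprime pp d0) => d' cpd' defd.
rewrite defd; apply: allpairs_f.
  rewrite -dvdn_divisors //.
  have : d' %| m * p ^ e by apply: dvdn_trans dn; rewrite defd dvdn_mulr.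
  by rewrite Gauss_dvdl // coprimeXr // coprime_sym.
rewrite mem_iota /= add0n ltnS.
have : p ^ logn p d %| m * p ^ e by apply: dvdn_trans dn; rewrite [X in _ %| X]defd dvdn_mull.
by rewrite Gauss_dvdr ?coprimeXl // dvdn_Pexp2l // prime_gt1.
Qed.

Section Bound.
Variable eps : R.
Hypothesis eps_gt0 : 0 < eps.

Let K := 1 + / (eps * ln 2).

Let ln2_gt0 : 0 < ln 2.
Proof. by have := ln_lt_2; lra. Qed.

Let K_ge1 : 1 <= K.
Proof.
have : 0 < / (eps * ln 2) by apply: Rinv_0_lt_compat; nra.
rewrite /K; lra.
Qed.

Lemma Rpower_INR_expn (p e : nat) : (0 < p)%N ->
  Rpower (INR (p ^ e)) eps = exp (INR e * eps * ln (INR p)).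
Proof.
move=> p0; have hp : 0 < INR p by apply: lt_0_INR; apply/ltP.
have -> : INR (p ^ e) = INR p ^ e.
  by elim: e => [|e IH] //=; rewrite expnS -multE mult_INR IH.
by rewrite -Rpower_pow // Rpower_mult /Rpower.
Qed.

Lemma prime_pow_succ_le (p e : nat) : prime p ->
  INR e.+1 <= K * Rpower (INR (p ^ e)) eps.
Proof.
move=> pp; rewrite Rpower_INR_expn ?prime_gt0 // S_INR.
set x := INR e * eps * ln (INR p).
have p2 : 2 <= INR p by apply: (le_INR 2); apply/leP; exact: prime_gt1.
have lp2 : ln 2 <= ln (INR p).
  by case: (Rle_lt_or_eq_dec _ _ p2) => [h|<-]; [left; apply: ln_increasing; lra | lra].
have e0 : 0 <= INR e by apply: pos_INR.
have c0 : 0 < eps * ln 2 by nra.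
have ex : INR e * (eps * ln 2) <= x.
  by rewrite /x Rmult_assoc; apply: Rmult_le_compat_l => //; apply: Rmult_le_compat_l; lra.
have : (eps * ln 2) * / (eps * ln 2) = 1 by field; lra.
have : 0 < / (eps * ln 2) by apply: Rinv_0_lt_compat.
have : 1 + x <= exp x by apply: exp_ineq1_le.
rewrite /K; nra.
Qed.

Lemma large_prime_pow_succ_le (p e : nat) : prime p -> exp (/ eps) <= INR p ->
  INR e.+1 <= Rpower (INR (p ^ e)) eps.
Proof.
move=> pp hp; rewrite Rpower_INR_expn ?prime_gt0 // S_INR.
have : / eps <= ln (INR p).
  rewrite -[/ eps]ln_exp.
  by case: (Rle_lt_or_eq_dec _ _ hp) => [h|<-]; [left; apply: ln_increasing => //; exact: exp_pos | lra].
move=> lp.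
have : eps * / eps = 1 by field; lra.
move=> ee; have elp : 1 <= eps * ln (INR p) by nra.
have : 0 <= INR e by apply: pos_INR.
move=> e0; have : INR e <= INR e * eps * ln (INR p) by rewrite Rmult_assoc; nra.
have : 1 + INR e * eps * ln (INR p) <= exp (INR e * eps * ln (INR p)) by apply: exp_ineq1_le.
lra.
Qed.

Variable P0 : nat.
Hypothesis P0_large : exp (/ eps) <= INR P0.

(* A prime p < P0 costs a factor K, a larger prime nothing; K^(P0 - t) pays
   for all the primes in [t, P0). *)
Lemma exponent_weight_le (p e t : nat) : prime p -> (t <= p)%N ->
  INR e.+1 * K ^ (P0 - p.+1) <= Rpower (INR (p ^ e)) eps * K ^ (P0 - t).
Proof.
move=> pp tp.
have KP : 0 <= K ^ (P0 - p.+1) by apply: pow_le; lra.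
case: (ltnP p P0) => pP0.
- have Kle : K ^ (P0 - p.+1) * K <= K ^ (P0 - t).
    rewrite Rmult_comm tech_pow_Rmult; apply: Rle_pow => //; apply/leP.
    by rewrite -subSn //; exact: leq_sub2l.
  have := prime_pow_succ_le p e pp.
  have : 0 < Rpower (INR (p ^ e)) eps by apply: exp_pos.
  nra.
- have -> : (P0 - p.+1 = 0)%N by apply/eqP; rewrite subn_eq0; apply: leq_trans pP0 _.
  have : 1 <= K ^ (P0 - t) by apply: pow_R1_Rle.
  have : exp (/ eps) <= INR p by apply: (Rle_trans _ _ _ P0_large); apply: le_INR; apply/leP.
  move/(large_prime_pow_succ_le p e pp).
  have : 0 < Rpower (INR (p ^ e)) eps by apply: exp_pos.
  rewrite /=; nra.
Qed.

(* Induct on the least prime factor p of n: strip the full power p^e off n;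
   the remaining cofactor only has prime factors larger than p. *)
Lemma size_divisors_le_weighted (n t : nat) : (0 < n)%N ->
  (forall d, (1 < d)%N -> d %| n -> (t <= d)%N) ->
  INR (size (divisors n)) <= Rpower (INR n) eps * K ^ (P0 - t).
Proof.
elim: n.+1 {-2}n (ltnSn n) t => // N IH {}n nN t n0 ht.
case: (ltngtP n 1) => [|n1|->].
- by rewrite ltnNge n0.
- have pp := pdiv_prime n1.
  set p := pdiv n in pp *.
  case: (pfactor_coprime pp n0) => m cpm defn.
  set e := logn p n in defn.
  have m0 : (0 < m)%N by move: n0; rewrite defn muln_gt0 => /andP[].
  have mn : (m < n)%N.
    have e1 : (0 < e)%N by rewrite /e -(pfactor_dvdn 1 pp n0) expn1 /p pdiv_dvd.
    have pe1 : (1 < p ^ e)%N by rewrite -(exp1n e) ltn_exp2r -?lt0n ?prime_gt1.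
    by rewrite defn -{1}(muln1 m) ltn_pmul2l.
  have hm : forall d, (1 < d)%N -> d %| m -> (p.+1 <= d)%N.
    move=> d d1 dm.
    have dn : d %| n by rewrite defn; apply: dvdn_mulr.
    have := pdiv_min_dvd d1 dn; rewrite -/p leq_eqVlt => /orP[/eqP pd|//].
    by move: cpm; rewrite pd /coprime (gcdn_idPl dm) => /eqP d1'; rewrite d1' in d1.
  have tp : (t <= p)%N by apply: ht => //; [exact: prime_gt1 | exact: pdiv_dvd].
  have IHm := IH m (leq_trans mn nN) p.+1 m0 hm.
  have Hsz : INR (size (divisors n)) <= INR (size (divisors m)) * INR e.+1.
    by rewrite -mult_INR; apply: le_INR; apply/leP; rewrite defn; exact: size_divisors_mul_pfactor.
  have Hn : Rpower (INR n) eps = Rpower (INR m) eps * Rpower (INR (p ^ e)) eps.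
    rewrite Rpower_mult_distr -?mult_INR ?multE -?defn //; apply: lt_0_INR; apply/ltP => //.
    by rewrite expn_gt0 prime_gt0.
  have := exponent_weight_le p e t pp tp.
  have : 0 < Rpower (INR m) eps by apply: exp_pos.
  have : 0 <= INR e.+1 by apply: pos_INR.
  rewrite Hn; nra.
- rewrite (_ : INR 1 = 1) // /Rpower ln_1 Rmult_0_r exp_0 Rmult_1_l.
  exact: pow_R1_Rle.
Qed.

End Bound.

Lemma size_divisors_le (eps : R) : 0 < eps -> exists C, 1 <= C /\
  forall n, (0 < n)%coq_nat -> INR (size (divisors n)) <= C * Rpower (INR n) eps.
Proof.
move=> eps0; case: (INR_unbounded (exp (/ eps))) => P0 hP0.
exists ((1 + / (eps * ln 2)) ^ P0); split.
  apply: pow_R1_Rle.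
  have : 0 < / (eps * ln 2) by apply: Rinv_0_lt_compat; have := ln_lt_2; nra.
  lra.
move=> n /ltP n0; rewrite Rmult_comm -(subn0 P0).
apply: size_divisors_le_weighted => //; exact: Rlt_le.
Qed.

Lemma In_divisors (d n : nat) : (0 < n)%coq_nat -> (exists q, n = (q * d)%coq_nat) ->
  List.In d (divisors n).
Proof.
move=> /ltP n0 [q defn]; have : d \in divisors n by rewrite -dvdn_divisors // defn multE dvdn_mull.
by elim: (divisors n) => //= x l IH; rewrite in_cons => /orP[/eqP ->|/IH]; [left | right].
Qed.

End DivisorBound.

Definition Zdivisors (n : Z) : list Z := map Z.of_nat (prime.divisors (Z.to_nat n)).

Lemma in_Zdivisors (d n : Z) : (0 < d)%Z -> (0 < n)%Z -> (d | n)%Z -> In d (Zdivisors n).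
Proof.
  intros Hd Hn [q Hq].
  rewrite <- (Z2Nat.id d) by lia. apply in_map, DivisorBound.In_divisors; [lia|].
  exists (Z.to_nat q). rewrite Hq, Z2Nat.inj_mul by nia. reflexivity.
Qed.

Lemma Zdivisors_length_le (eps : R) : (0 < eps)%R -> exists C, (1 <= C)%R /\
  forall n, (0 < n)%Z -> (INR (length (Zdivisors n)) <= C * Rpower (IZR n) eps)%R.
Proof.
  intro Heps. destruct (DivisorBound.size_divisors_le eps Heps) as (C & HC & Hdiv).
  exists C. split; [exact HC|]. intros n Hn.
  replace (IZR n) with (INR (Z.to_nat n)) by (rewrite INR_IZR_INZ, Z2Nat.id by lia; reflexivity).
  unfold Zdivisors. rewrite length_map. apply Hdiv. lia.
Qed.

Open Scope Z_scope.

(** * Binary quadratic forms *)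

Lemma gcd_pos_r (t N : Z) : N <> 0 -> 0 < Z.gcd t N.
Proof.
  intro HN. pose proof (Z.gcd_nonneg t N).
  assert (Z.gcd t N <> 0) by (intro E; apply Z.gcd_eq_0_r in E; lia). lia.
Qed.

Lemma gcd_pos_l (m n : Z) : m <> 0 -> 0 < Z.gcd m n.
Proof. intro Hm. rewrite Z.gcd_comm. now apply gcd_pos_r. Qed.

Lemma gcd_div_mul_l (m n : Z) : m <> 0 -> m = Z.gcd m n * (m / Z.gcd m n).
Proof. intro Hm. apply Zdivide_Zdiv_eq; [now apply gcd_pos_l | apply Z.gcd_divide_l]. Qed.

Lemma gcd_div_mul_r (m n : Z) : m <> 0 -> n = Z.gcd m n * (n / Z.gcd m n).
Proof. intro Hm. apply Zdivide_Zdiv_eq; [now apply gcd_pos_l | apply Z.gcd_divide_r]. Qed.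

Lemma coprime_div_gcd (m n : Z) : m <> 0 -> Z.gcd (m / Z.gcd m n) (n / Z.gcd m n) = 1.
Proof. intro Hm. apply Z.gcd_div_gcd; [pose proof (gcd_pos_l m n Hm); lia | reflexivity]. Qed.

Lemma div_gcd_dvd_of_dvd_mul (N t s : Z) : N <> 0 -> (N | t * s) -> (N / Z.gcd t N | s).
Proof.
  intros HN Hts.
  pose proof (gcd_pos_r t N HN) as Hg.
  apply Z.gauss with (t / Z.gcd t N).
  - apply Z.mul_divide_cancel_l with (Z.gcd t N); [lia|].
    rewrite Z.mul_assoc, <- !Zdivide_Zdiv_eq by (easy || apply Z.gcd_divide_l || apply Z.gcd_divide_r).
    exact Hts.
  - rewrite Z.gcd_comm. apply Z.gcd_div_gcd; [lia | reflexivity].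
Qed.

Lemma dvd_of_dvd_mul_primitive (a b c d Y : Z) : Z.gcd (Z.gcd a b) c = 1 ->
  (d | Y * a) -> (d | Y * b) -> (d | Y * c) -> (d | Y).
Proof.
  intros Hprim Ha Hb Hc.
  apply Z.divide_abs_r.
  replace (Z.abs Y) with (Z.gcd (Z.gcd (Y * a) (Y * b)) (Y * c))
    by (rewrite Z.gcd_mul_mono_l, <- (Z.gcd_abs_r _ (Y * c)), Z.abs_mul,
          Z.gcd_mul_mono_l, Z.gcd_abs_r, Hprim; lia).
  now apply Z.gcd_greatest; [apply Z.gcd_greatest|].
Qed.

Lemma qform_complete_square (a b c m n : Z) :
  (2*c*n + b*m) * (2*c*n + b*m) - qdisc a b c * (m*m) = 4 * c * qform a b c m n.
Proof. unfold qdisc, qform. ring. Qed.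

Lemma qform_gcd_factor (a b c m n : Z) : m <> 0 ->
  qform a b c m n = Z.gcd m n * Z.gcd m n * qform a b c (m / Z.gcd m n) (n / Z.gcd m n).
Proof.
  intro Hm. pose proof (gcd_div_mul_l m n Hm) as Em. pose proof (gcd_div_mul_r m n Hm) as En.
  set (g := Z.gcd m n) in *. set (m' := m / g) in *. set (n' := n / g) in *.
  clearbody g m' n'. rewrite Em, En. unfold qform. ring.
Qed.

Lemma qdisc_nonsquare_ge5 (a b c : Z) : 0 < qdisc a b c ->
  ~ (exists r, r * r = qdisc a b c) -> 5 <= qdisc a b c.
Proof.
  intros H N. unfold qdisc in *.
  destruct (Z.Even_or_Odd b) as [[j ->]|[j ->]].
  - assert (b4 : (2*j)*(2*j) - 4*a*c = 4 * (j*j - a*c)) by ring.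
    destruct (Z.eq_dec (j*j - a*c) 1) as [E|E]; [exfalso; apply N; exists 2; lia|]. lia.
  - assert (b4 : (2*j+1)*(2*j+1) - 4*a*c = 4 * (j*j + j - a*c) + 1) by ring.
    destruct (Z.eq_dec (j*j + j - a*c) 0) as [E|E]; [exfalso; apply N; exists 1; lia|]. lia.
Qed.

Lemma qdisc_nonsquare_c_neq0 (a b c : Z) : ~ (exists r, r * r = qdisc a b c) -> c <> 0.
Proof. intros N E. apply N. exists b. unfold qdisc. rewrite E. ring. Qed.

Lemma square_of_sq_eq_mul_sq (D y m : Z) : m <> 0 -> y * y = D * (m * m) ->
  exists r, r * r = D.
Proof.
  intros Hm E.
  pose proof (gcd_div_mul_l m y Hm) as Em. pose proof (gcd_div_mul_r m y Hm) as Ey.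
  pose proof (coprime_div_gcd m y Hm) as G.
  pose proof (gcd_pos_l m y Hm) as Hg.
  set (g := Z.gcd m y) in *. set (m' := m / g) in *. set (y' := y / g) in *. clearbody m' y'.
  assert (E' : y' * y' = D * (m' * m')).
  { apply Z.mul_reg_l with (g * g); [nia|]. rewrite Em, Ey in E. lia. }
  assert (Hd : (m' | y' * y')) by (exists (D * m'); rewrite E'; ring).
  assert (Hd1 : (m' | y')) by (apply Z.gauss with y'; [exact Hd | exact G]).
  assert (Hd2 : (m' | 1)) by (rewrite <- G; apply Z.gcd_greatest; [apply Z.divide_refl | exact Hd1]).
  apply Z.divide_1_r in Hd2. exists y'. rewrite E'. destruct Hd2 as [-> | ->]; ring.
Qed.

Lemma qform_nonsquare_neq0 (a b c m n : Z) : ~ (exists r, r * r = qdisc a b c) -> m <> 0 ->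
  qform a b c m n <> 0.
Proof.
  intros N Hm E. apply N, (square_of_sq_eq_mul_sq _ (2*c*n + b*m) m Hm).
  pose proof (qform_complete_square a b c m n) as Q. rewrite E in Q. lia.
Qed.

Lemma primitive_part (a b c : Z) : qdisc a b c <> 0 -> exists g a0 b0 c0,
  0 < g /\ Z.gcd (Z.gcd a0 b0) c0 = 1 /\
  (forall m n, qform a b c m n = g * qform a0 b0 c0 m n) /\
  qdisc a b c = g * g * qdisc a0 b0 c0.
Proof.
  intro HD. set (g := Z.gcd (Z.gcd a b) c).
  assert (Hg : 0 < g).
  { pose proof (Z.gcd_nonneg (Z.gcd a b) c).
    assert (g <> 0); [|lia].
    intro E. apply Z.gcd_eq_0 in E as [E Ec]. apply Z.gcd_eq_0 in E as [Ea Eb].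
    apply HD. unfold qdisc. rewrite Ea, Eb, Ec. ring. }
  assert (Dab : (g | Z.gcd a b)) by apply Z.gcd_divide_l.
  assert (Da : (g | a)) by (apply Z.divide_trans with (1 := Dab), Z.gcd_divide_l).
  assert (Db : (g | b)) by (apply Z.divide_trans with (1 := Dab), Z.gcd_divide_r).
  assert (Dc : (g | c)) by apply Z.gcd_divide_r.
  exists g, (a / g), (b / g), (c / g). split; [exact Hg|]. split.
  - rewrite !Z.gcd_div_factor by assumption. apply Z.div_same. lia.
  - apply Zdivide_Zdiv_eq in Da, Db, Dc; [|lia..].
    set (a0 := a / g) in *. set (b0 := b / g) in *. set (c0 := c / g) in *.
    clearbody g a0 b0 c0. subst a b c.
    split; [intros m n|]; unfold qform, qdisc; ring.
Qed.

Lemma reps_of_primitive_part (a b c a0 b0 c0 g k : Z) (L : list (Z * Z)) : g <> 0 ->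
  (forall m n, qform a b c m n = g * qform a0 b0 c0 m n) ->
  ~ (exists r, r * r = qdisc a0 b0 c0) -> Forall (A_set a b c k) L ->
  L = [] \/ exists k0, k0 <> 0 /\ Forall (A_set a0 b0 c0 k0) L.
Proof.
  intros Hg Hscale N HF. destruct L as [|[m n] l]; [now left|right].
  inversion HF as [|p l' [Hm Hq] HFl]; subst. cbn [fst snd] in *.
  exists (qform a0 b0 c0 m n). split; [now apply qform_nonsquare_neq0|].
  apply Forall_impl with (2 := HF). intros p [Hp Hpq]. split; [exact Hp|].
  apply Z.mul_reg_l with g; [exact Hg|]. rewrite <- !Hscale, Hpq. reflexivity.
Qed.

Definition qbil (a b c m1 n1 m2 n2 : Z) : Z :=
  2*a*m1*m2 + b*(m1*n2 + n1*m2) + 2*c*n1*n2.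

Lemma qform_basis_change (a b c m n x y X Y : Z) :
  qform a b c (X*m + Y*x) (X*n + Y*y)
  = qform (qform a b c m n) (qbil a b c m n x y) (qform a b c x y) X Y.
Proof. unfold qform, qbil. ring. Qed.

Lemma qbil_basis_change (a b c m n x y X Y X' Y' : Z) :
  qbil a b c (X*m + Y*x) (X*n + Y*y) (X'*m + Y'*x) (X'*n + Y'*y)
  = qbil (qform a b c m n) (qbil a b c m n x y) (qform a b c x y) X Y X' Y'.
Proof. unfold qform, qbil. ring. Qed.

Lemma qbil_sq_sub_qform (a b c m n x y : Z) : m*y - n*x = 1 ->
  qbil a b c m n x y * qbil a b c m n x y - 4 * qform a b c m n * qform a b c x y
  = qdisc a b c.
Proof.
  intro Hdet. transitivity (qdisc a b c * ((m*y - n*x) * (m*y - n*x))).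
  - unfold qbil, qform, qdisc. ring.
  - rewrite Hdet. ring.
Qed.

Lemma qform_dvd (d a b c m n : Z) : (d | a) -> (d | b) -> (d | c) -> (d | qform a b c m n).
Proof.
  intros [a' ->] [b' ->] [c' ->]. exists (qform a' b' c' m n). unfold qform. ring.
Qed.

Lemma qbil_dvd (d a b c m1 n1 m2 n2 : Z) : (d | a) -> (d | b) -> (d | c) ->
  (d | qbil a b c m1 n1 m2 n2).
Proof.
  intros [a' ->] [b' ->] [c' ->]. exists (qbil a' b' c' m1 n1 m2 n2). unfold qbil. ring.
Qed.

(* The coefficients in the basis (m,n), (x,y) transform back to a, b, c by
   the inverse basis change (y, -n), (-x, m). *)
Lemma coeffs_dvd_of_basis_change (a b c m n x y d : Z) : m*y - n*x = 1 ->
  (d | qform a b c m n) -> (d | qbil a b c m n x y) -> (d | qform a b c x y) ->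
  (d | a) /\ (d | b) /\ (d | c).
Proof.
  intros Hdet Hk Hb Hc.
  set (k := qform a b c m n) in *. set (be := qbil a b c m n x y) in *.
  set (ga := qform a b c x y) in *.
  assert (Ea : a = qform k be ga y (-n)).
  { transitivity (a * (m*y - n*x) * (m*y - n*x)); [rewrite Hdet; ring|].
    subst k be ga. unfold qform, qbil. ring. }
  assert (Eb : b = qbil k be ga y (-n) (-x) m).
  { transitivity (b * (m*y - n*x) * (m*y - n*x)); [rewrite Hdet; ring|].
    subst k be ga. unfold qform, qbil. ring. }
  assert (Ec : c = qform k be ga (-x) m).
  { transitivity (c * (m*y - n*x) * (m*y - n*x)); [rewrite Hdet; ring|].
    subst k be ga. unfold qform, qbil. ring. }
  rewrite Ea, Eb, Ec. split; [|split]; auto using qform_dvd, qbil_dvd.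
Qed.

(* In coordinates adapted to a first representation: (1, 0) represents k and
   be is its root. *)
Lemma root_congr_dvd (k be ga X Y X' Y' : Z) : X*Y' - X'*Y = 1 ->
  qform k be ga X Y = k -> (2*k | qbil k be ga X Y X' Y' - be) ->
  (k | Y * be) /\ (k | Y * ga).
Proof.
  intros Hdet Hq Hb. unfold qform in Hq.
  assert (H1 : (k | Y * (X*be + Y*ga))) by (exists (1 - X*X); nia).
  assert (H2 : (k | Y * (X'*be + Y'*ga))).
  { assert (E : qbil k be ga X Y X' Y' - be = 2 * (X*X'*k + Y * (X'*be + Y'*ga))).
    { unfold qbil. replace (X*Y') with (1 + X'*Y) by lia. ring. }
    rewrite E in Hb. destruct Hb as [u Hu]. exists (u - X*X'). nia. }
  split.
  - replace (Y*be) with (Y' * (Y * (X*be + Y*ga)) - Y * (Y * (X'*be + Y'*ga)))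
      by (transitivity (Y*be*(X*Y' - X'*Y)); [|rewrite Hdet]; ring).
    apply Z.divide_sub_r; apply Z.divide_mul_r; assumption.
  - replace (Y*ga) with (X * (Y * (X'*be + Y'*ga)) - X' * (Y * (X*be + Y*ga)))
      by (transitivity (Y*ga*(X*Y' - X'*Y)); [|rewrite Hdet]; ring).
    apply Z.divide_sub_r; apply Z.divide_mul_r; assumption.
Qed.

(* The root attached to a primitive representation (m, n): the middle
   coefficient of the form in a unimodular basis starting with (m, n). *)
Definition rep_root (a b c m n : Z) : Z :=
  let '(u, v, _) := extgcd m n in qbil a b c m n (-v) u.

Lemma rep_root_spec (a b c m n : Z) : Z.gcd m n = 1 ->
  exists x y, m*y - n*x = 1 /\ rep_root a b c m n = qbil a b c m n x y.
Proof.
  intro Hg. unfold rep_root.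
  destruct (extgcd m n) as [[u v] d] eqn:E.
  apply extgcd_correct in E as [Huv Hd].
  exists (-v), u. split; [lia | reflexivity].
Qed.

Lemma qform_scale (a b c m n Y : Z) : qform (Y*a) (Y*b) (Y*c) m n = Y * qform a b c m n.
Proof. unfold qform. ring. Qed.

Lemma qbil_scale (a b c m1 n1 m2 n2 Y : Z) :
  qbil (Y*a) (Y*b) (Y*c) m1 n1 m2 n2 = Y * qbil a b c m1 n1 m2 n2.
Proof. unfold qbil. ring. Qed.

(* In a unimodular basis v1, w1 with root be, write v2 = X v1 + Y w1, so that
   Y = det(v1, v2); root_congr_dvd makes k divide Y times every coefficient of
   the form in that basis, hence Y a, Y b and Y c. *)
Lemma rep_root_congr_det_dvd (a b c k m1 n1 m2 n2 : Z) :
  Z.gcd (Z.gcd a b) c = 1 -> Z.gcd m1 n1 = 1 -> Z.gcd m2 n2 = 1 ->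
  qform a b c m1 n1 = k -> qform a b c m2 n2 = k ->
  (2*k | rep_root a b c m2 n2 - rep_root a b c m1 n1) -> (k | m1*n2 - n1*m2).
Proof.
  intros Hprim G1 G2 Hq1 Hq2 Hr.
  destruct (rep_root_spec a b c m1 n1 G1) as (x1 & y1 & D1 & R1).
  destruct (rep_root_spec a b c m2 n2 G2) as (x2 & y2 & D2 & R2).
  set (X := m2*y1 - n2*x1). set (Y := m1*n2 - n1*m2).
  set (X' := x2*y1 - y2*x1). set (Y' := m1*y2 - n1*x2).
  assert (E : forall z, z = z * (m1*y1 - n1*x1)) by (intro; rewrite D1; ring).
  assert (Em : X*m1 + Y*x1 = m2) by (rewrite (E m2); subst X Y; ring).
  assert (En : X*n1 + Y*y1 = n2) by (rewrite (E n2); subst X Y; ring).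
  assert (Ex : X'*m1 + Y'*x1 = x2) by (rewrite (E x2); subst X' Y'; ring).
  assert (Ey : X'*n1 + Y'*y1 = y2) by (rewrite (E y2); subst X' Y'; ring).
  assert (Hdet : X*Y' - X'*Y = 1)
    by (rewrite <- D2, (E (m2*y2 - n2*x2)); subst X Y X' Y'; ring).
  set (be := qbil a b c m1 n1 x1 y1). set (ga := qform a b c x1 y1).
  assert (HY : (k | Y * be) /\ (k | Y * ga)).
  { apply (root_congr_dvd k be ga X Y X' Y' Hdet).
    - transitivity (qform a b c m2 n2); [|exact Hq2].
      rewrite <- Em, <- En, qform_basis_change, Hq1. reflexivity.
    - replace (qbil k be ga X Y X' Y' - be)
        with (rep_root a b c m2 n2 - rep_root a b c m1 n1); [exact Hr|].
      rewrite R1, R2, <- Em, <- En, <- Ex, <- Ey, qbil_basis_change, Hq1. reflexivity. }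
  destruct HY as [Hbe Hga].
  assert (Hk : (k | qform (Y*a) (Y*b) (Y*c) m1 n1))
    by (rewrite qform_scale, Hq1; apply Z.divide_factor_r).
  destruct (coeffs_dvd_of_basis_change (Y*a) (Y*b) (Y*c) m1 n1 x1 y1 k D1 Hk)
    as (Ha & Hb & Hc); rewrite ?qbil_scale, ?qform_scale; trivial.
  exact (dvd_of_dvd_mul_primitive a b c k Y Hprim Ha Hb Hc).
Qed.

Lemma dvd_sq_sub_of_dvd_sub (M x y : Z) : (2*M | x - y) -> (4*M | x*x - y*y).
Proof. intros [q Hq]. exists (q * (y + M * q)). nia. Qed.

Lemma rep_root_sq_sub (a b c m n : Z) : Z.gcd m n = 1 ->
  (4 * qform a b c m n | rep_root a b c m n * rep_root a b c m n - qdisc a b c).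
Proof.
  intro Hg. destruct (rep_root_spec a b c m n Hg) as (x & y & Hdet & ->).
  rewrite <- (qbil_sq_sub_qform a b c m n x y Hdet).
  exists (qform a b c x y). ring.
Qed.

Lemma rep_root_mod_sqrt (a b c m n : Z) : Z.gcd m n = 1 -> qform a b c m n <> 0 ->
  let k := qform a b c m n in let r := rep_root a b c m n mod (2 * Z.abs k) in
  0 <= r < 4 * Z.abs k /\ (4 * Z.abs k | r * r - qdisc a b c) /\
  (2 * Z.abs k | rep_root a b c m n - r).
Proof.
  intros Hg Hk k r.
  assert (Hr : 0 <= r < 2 * Z.abs k) by (apply Z.mod_pos_bound; lia).
  assert (Hdiff : (2 * Z.abs k | rep_root a b c m n - r)).
  { exists (rep_root a b c m n / (2 * Z.abs k)). unfold r. rewrite Z.mod_eq by lia. ring. }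
  split; [lia|]. split; [|exact Hdiff].
  replace (r * r - qdisc a b c) with
    ((rep_root a b c m n * rep_root a b c m n - qdisc a b c)
     - (rep_root a b c m n * rep_root a b c m n - r * r)) by ring.
  apply Z.divide_sub_r.
  - replace (4 * Z.abs k) with (Z.abs (4 * k)) by lia.
    apply Z.divide_abs_l, rep_root_sq_sub, Hg.
  - now apply dvd_sq_sub_of_dvd_sub.
Qed.

(** * Square roots modulo N *)

(* For roots x0, x of X^2 = D mod N put t = x - x0 mod N and g = gcd(t, N).
   Then N/g divides t + 2 x0, so with h = gcd(g, N/g) the class of t/g modulo
   (N/g)/h is fixed by g; only the quotient t/g / ((N/g)/h) < h varies, and
   h^2 divides 4D. *)
Definition sqrt_mod_code (N x0 x : Z) : Z * Z :=
  let t := (x - x0) mod N in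
  let g := Z.gcd t N in
  (g, t / g / (N / g / Z.gcd g (N / g))).

Definition some_sqrt_mod (D N : Z) : Z :=
  epsilon (inhabits 0) (fun x => (N | x*x - D)).

Lemma some_sqrt_mod_spec (D N x : Z) : (N | x*x - D) ->
  (N | some_sqrt_mod D N * some_sqrt_mod D N - D).
Proof. intro Hx. unfold some_sqrt_mod. apply epsilon_spec. now exists x. Qed.

Section SqrtModCode.

Variables D N x0 : Z.
Hypothesis N_pos : 0 < N.
Hypothesis x0_root : (N | x0*x0 - D).

Lemma sqrt_mod_diff_dvd (x : Z) : (N | x*x - D) ->
  (N / Z.gcd ((x - x0) mod N) N | (x - x0) mod N + 2*x0).
Proof.
  intro Hx. apply div_gcd_dvd_of_dvd_mul; [lia|].
  rewrite Z.mod_eq by lia.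
  destruct Hx as [u Hu], x0_root as [v Hv].
  exists (u - v - 2 * ((x - x0) / N) * x + ((x - x0) / N) * ((x - x0) / N) * N). nia.
Qed.

Lemma sqrt_mod_code_inj (x x' : Z) : 0 <= x < N -> 0 <= x' < N ->
  (N | x*x - D) -> (N | x'*x' - D) -> sqrt_mod_code N x0 x = sqrt_mod_code N x0 x' -> x = x'.
Proof.
  intros Hx Hx' Rx Rx' E. unfold sqrt_mod_code in E.
  pose proof (sqrt_mod_diff_dvd x Rx) as Dt. pose proof (sqrt_mod_diff_dvd x' Rx') as Dt'.
  set (t := (x - x0) mod N) in *. set (t' := (x' - x0) mod N) in *.
  injection E as Eg Ediv. rewrite <- Eg in Dt', Ediv.
  set (g := Z.gcd t N) in *.
  assert (Hg : 0 < g) by (apply gcd_pos_r; lia).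
  assert (Et : t = g * (t / g)) by (apply Zdivide_Zdiv_eq; [lia | apply Z.gcd_divide_l]).
  assert (Et' : t' = g * (t' / g))
    by (apply Zdivide_Zdiv_eq; [lia | rewrite Eg; apply Z.gcd_divide_l]).
  assert (EN : N = g * (N / g)) by (apply Zdivide_Zdiv_eq; [lia | apply Z.gcd_divide_r]).
  set (N1 := N / g) in *.
  assert (HN1 : 0 < N1) by nia.
  assert (Hdiff : (N1 / Z.gcd g N1 | t / g - t' / g)).
  { apply div_gcd_dvd_of_dvd_mul; [lia|].
    replace (g * (t / g - t' / g)) with ((t + 2*x0) - (t' + 2*x0)) by lia.
    now apply Z.divide_sub_r. }
  set (N2 := N1 / Z.gcd g N1) in *.
  assert (HN2 : 0 < N2).
  { pose proof (gcd_pos_r g N1 ltac:(lia)).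
    pose proof (Zdivide_Zdiv_eq (Z.gcd g N1) N1 ltac:(lia) (Z.gcd_divide_r g N1)). nia. }
  assert (Ett : t = t').
  { destruct Hdiff as [s Hs].
    pose proof (Z.div_mod (t / g) N2 ltac:(lia)). pose proof (Z.mod_pos_bound (t / g) N2 HN2).
    pose proof (Z.div_mod (t' / g) N2 ltac:(lia)). pose proof (Z.mod_pos_bound (t' / g) N2 HN2).
    assert (s = 0) by nia. nia. }
  unfold t, t' in Ett. rewrite !Z.mod_eq in Ett by lia.
  assert (Hq : N * ((x - x0) / N - (x' - x0) / N) = x - x') by lia.
  assert ((x - x0) / N - (x' - x0) / N = 0) by nia.
  lia.
Qed.

Lemma sqrt_mod_code_range (x : Z) : 0 < D -> (N | x*x - D) ->
  0 < fst (sqrt_mod_code N x0 x) /\ (fst (sqrt_mod_code N x0 x) | N) /\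
  0 <= snd (sqrt_mod_code N x0 x) < Z.sqrt (4 * D).
Proof.
  intros HD Rx. pose proof (sqrt_mod_diff_dvd x Rx) as Dt.
  unfold sqrt_mod_code; simpl.
  set (t := (x - x0) mod N) in *. set (g := Z.gcd t N) in *.
  assert (Ht : 0 <= t < N) by (apply Z.mod_pos_bound; lia).
  assert (Hg : 0 < g) by (apply gcd_pos_r; lia).
  assert (Et : t = g * (t / g)) by (apply Zdivide_Zdiv_eq; [lia | apply Z.gcd_divide_l]).
  assert (EN : N = g * (N / g)) by (apply Zdivide_Zdiv_eq; [lia | apply Z.gcd_divide_r]).
  set (N1 := N / g) in *.
  assert (HN1 : 0 < N1) by nia.
  set (h := Z.gcd g N1).
  assert (Hh : 0 < h) by (apply gcd_pos_r; lia).
  assert (Eg : g = h * (g / h)) by (apply Zdivide_Zdiv_eq; [lia | apply Z.gcd_divide_l]).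
  assert (EN1 : N1 = h * (N1 / h)) by (apply Zdivide_Zdiv_eq; [lia | apply Z.gcd_divide_r]).
  assert (Hh2x0 : (h | 2 * x0)).
  { replace (2 * x0) with ((t + 2 * x0) - g * (t / g)) by lia.
    apply Z.divide_sub_r; [apply Z.divide_trans with N1; [apply Z.gcd_divide_r | exact Dt]|].
    apply Z.divide_mul_l, Z.gcd_divide_l. }
  assert (Hhh : (h * h | 4 * D)).
  { destruct Hh2x0 as [u Hu]. destruct x0_root as [v Hv].
    exists (u * u - 4 * v * (g / h) * (N1 / h)). nia. }
  assert (Hsq : h <= Z.sqrt (4 * D))
    by (apply Z.sqrt_le_square; [lia | lia | apply Z.divide_pos_le; [lia | exact Hhh]]).
  split; [lia|]. split; [apply Z.gcd_divide_r|].
  split; [apply Z.div_pos; [apply Z.div_pos|]; nia|].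
  apply Z.lt_le_trans with h; [|exact Hsq].
  apply Z.div_lt_upper_bound; nia.
Qed.

End SqrtModCode.

Definition root_code (a b c m n : Z) : Z * Z :=
  let k := qform a b c m n in
  let N := 4 * Z.abs k in
  sqrt_mod_code N (some_sqrt_mod (qdisc a b c) N) (rep_root a b c m n mod (2 * Z.abs k)).

Lemma root_code_range (a b c m n : Z) : 0 < qdisc a b c -> Z.gcd m n = 1 ->
  qform a b c m n <> 0 ->
  0 < fst (root_code a b c m n) /\ (fst (root_code a b c m n) | 4 * qform a b c m n) /\
  0 <= snd (root_code a b c m n) < Z.sqrt (4 * qdisc a b c).
Proof.
  intros HD Hg Hk. unfold root_code.
  pose proof (rep_root_mod_sqrt a b c m n Hg Hk) as (Hr & Hsq & _). cbv zeta in Hr, Hsq.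
  assert (HN : 0 < 4 * Z.abs (qform a b c m n)) by lia.
  destruct (sqrt_mod_code_range _ _ _ HN (some_sqrt_mod_spec _ _ _ Hsq) _ HD Hsq)
    as (H1 & H2 & H3).
  split; [exact H1|]. split; [|exact H3].
  apply Z.divide_trans with (1 := H2).
  replace (4 * Z.abs (qform a b c m n)) with (Z.abs (4 * qform a b c m n)) by lia.
  apply Z.divide_abs_l, Z.divide_refl.
Qed.

Lemma root_code_eq_det_dvd (a b c m1 n1 m2 n2 : Z) : Z.gcd (Z.gcd a b) c = 1 ->
  Z.gcd m1 n1 = 1 -> Z.gcd m2 n2 = 1 -> qform a b c m1 n1 <> 0 ->
  qform a b c m1 n1 = qform a b c m2 n2 -> root_code a b c m1 n1 = root_code a b c m2 n2 ->
  (qform a b c m1 n1 | m1*n2 - n1*m2).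
Proof.
  intros Hprim G1 G2 Hk Ek Ec. unfold root_code in Ec. rewrite <- Ek in Ec.
  destruct (rep_root_mod_sqrt a b c m1 n1 G1 Hk) as (Hr1 & Hsq1 & Hd1).
  destruct (rep_root_mod_sqrt a b c m2 n2 G2 ltac:(congruence)) as (Hr2 & Hsq2 & Hd2).
  cbv zeta in Hr1, Hsq1, Hd1, Hr2, Hsq2, Hd2. rewrite <- Ek in Hr2, Hsq2, Hd2.
  set (k := qform a b c m1 n1) in *.
  assert (HN : 0 < 4 * Z.abs k) by lia.
  apply (sqrt_mod_code_inj _ _ _ HN (some_sqrt_mod_spec _ _ _ Hsq1)) in Ec;
    [| assumption..].
  apply (rep_root_congr_det_dvd a b c k); auto.
  apply Z.divide_abs_l. replace (Z.abs (2 * k)) with (2 * Z.abs k) by lia.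
  rewrite Ec in Hd1.
  replace (rep_root a b c m2 n2 - rep_root a b c m1 n1)
    with ((rep_root a b c m2 n2 - rep_root a b c m2 n2 mod (2 * Z.abs k))
          - (rep_root a b c m1 n1 - rep_root a b c m2 n2 mod (2 * Z.abs k))) by ring.
  now apply Z.divide_sub_r.
Qed.

(** * Representations near an asymptote *)

Open Scope R_scope.

Lemma Rabs_sub_le_Rmax (A B : R) : 0 <= A * B -> Rabs (A - B) <= Rmax (Rabs A) (Rabs B).
Proof. intro H. unfold Rmax, Rabs. repeat destruct Rcase_abs; destruct Rle_dec; nra. Qed.

(* With u = Y - s M, the identity u (Y + s M) = K pins down the sign of u and
   makes it small when M is large. *)
Lemma pell_deviation (s K M Y : R) : 0 < s -> 0 < M -> 0 <= Y -> Y*Y - s*s*M*M = K ->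
  0 <= (Y - s*M) * K /\ Rabs (Y - s*M) * (s*M) <= Rabs K.
Proof.
  intros Hs HM HY E.
  assert (F : (Y - s*M) * (Y + s*M) = K) by (rewrite <- E; ring).
  split.
  - rewrite <- F. replace ((Y - s*M) * ((Y - s*M) * (Y + s*M)))
      with ((Y - s*M) * (Y - s*M) * (Y + s*M)) by ring.
    apply Rmult_le_pos; [apply Rle_0_sqr | nra].
  - rewrite <- F, Rabs_mult, (Rabs_right (Y + s*M)) by nra.
    apply Rmult_le_compat_l; [apply Rabs_pos | lra].
Qed.

Lemma pell_cross_bound (s K M1 M2 Y1 Y2 : R) : 0 < s -> 0 < M1 -> 0 < M2 ->
  0 <= Y1 -> 0 <= Y2 -> Y1*Y1 - s*s*M1*M1 = K -> Y2*Y2 - s*s*M2*M2 = K ->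
  10*M1 < 11*M2 -> 10*M2 < 11*M1 -> 10 * s * Rabs (M1*Y2 - M2*Y1) <= 11 * Rabs K.
Proof.
  intros Hs H1 H2 HY1 HY2 E1 E2 R1 R2.
  destruct (pell_deviation s K M1 Y1 Hs H1 HY1 E1) as [S1 B1].
  destruct (pell_deviation s K M2 Y2 Hs H2 HY2 E2) as [S2 B2].
  replace (M1*Y2 - M2*Y1) with (M1*(Y2 - s*M2) - M2*(Y1 - s*M1)) by ring.
  set (u1 := Y1 - s*M1) in *. set (u2 := Y2 - s*M2) in *. clearbody u1 u2.
  assert (Hu : 0 <= u1 * u2).
  { destruct (Rtotal_order K 0) as [HK|[HK|HK]].
    - assert (u1 <= 0) by nra. assert (u2 <= 0) by nra. nra.
    - rewrite HK, Rabs_R0 in B1. assert (0 < s * M1) by nra.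
      assert (Hu1 : u1 = 0) by (unfold Rabs in B1; destruct Rcase_abs; nra).
      rewrite Hu1. lra.
    - assert (0 <= u1) by nra. assert (0 <= u2) by nra. nra. }
  assert (Hsign : 0 <= (M1*u2) * (M2*u1))
    by (replace ((M1*u2) * (M2*u1)) with ((M1*M2) * (u1*u2)) by ring; apply Rmult_le_pos; nra).
  pose proof (Rabs_sub_le_Rmax (M1*u2) (M2*u1) Hsign) as Hmax.
  rewrite !Rabs_mult, (Rabs_right M1), (Rabs_right M2) in Hmax by lra.
  assert (0 <= s * Rabs u1) by (apply Rmult_le_pos; [lra | apply Rabs_pos]).
  assert (0 <= s * Rabs u2) by (apply Rmult_le_pos; [lra | apply Rabs_pos]).
  assert (10 * s * (M1 * Rabs u2) <= 11 * (Rabs u2 * (s * M2))) by nra.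
  assert (10 * s * (M2 * Rabs u1) <= 11 * (Rabs u1 * (s * M1))) by nra.
  assert (0 <= Rabs (M1*u2 - M2*u1)) by apply Rabs_pos.
  unfold Rmax in Hmax. destruct Rle_dec; nra.
Qed.

Lemma pell_cross_bound_Z (D K M1 M2 Y1 Y2 : Z) : (0 < D)%Z -> (0 < M1)%Z -> (0 < M2)%Z ->
  (0 <= Y1)%Z -> (0 <= Y2)%Z -> (Y1*Y1 - D*(M1*M1) = K)%Z -> (Y2*Y2 - D*(M2*M2) = K)%Z ->
  (10*M1 < 11*M2)%Z -> (10*M2 < 11*M1)%Z ->
  10 * sqrt (IZR D) * IZR (Z.abs (M1*Y2 - M2*Y1)) <= 11 * IZR (Z.abs K).
Proof.
  intros HD H1 H2 HY1 HY2 E1 E2 R1 R2.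
  rewrite !abs_IZR, minus_IZR, !mult_IZR.
  assert (Hss : sqrt (IZR D) * sqrt (IZR D) = IZR D) by (apply sqrt_sqrt, IZR_le; lia).
  apply pell_cross_bound; try (apply IZR_lt || apply IZR_le; lia).
  - apply sqrt_lt_R0, IZR_lt, HD.
  - rewrite Hss, <- E1, minus_IZR, !mult_IZR. ring.
  - rewrite Hss, <- E2, minus_IZR, !mult_IZR. ring.
  - rewrite <- !mult_IZR. apply IZR_lt, R1.
  - rewrite <- !mult_IZR. apply IZR_lt, R2.
Qed.

Open Scope Z_scope.

Lemma Zabs_cross_same_sign (m1 m2 y1 y2 : Z) :
  (0 <? m1) = (0 <? m2) -> (0 <=? y1) = (0 <=? y2) ->
  Z.abs (Z.abs m1 * Z.abs y2 - Z.abs m2 * Z.abs y1) = Z.abs (m1*y2 - m2*y1).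
Proof.
  intros Sm Sy.
  destruct (Z.ltb_spec 0 m1), (Z.ltb_spec 0 m2); try discriminate;
  destruct (Z.leb_spec 0 y1), (Z.leb_spec 0 y2); try discriminate;
  repeat first [ rewrite (Z.abs_eq m1) by lia | rewrite (Z.abs_neq m1) by lia
               | rewrite (Z.abs_eq m2) by lia | rewrite (Z.abs_neq m2) by lia
               | rewrite (Z.abs_eq y1) by lia | rewrite (Z.abs_neq y1) by lia
               | rewrite (Z.abs_eq y2) by lia | rewrite (Z.abs_neq y2) by lia ];
  first [ f_equal; ring | rewrite <- Z.abs_opp; f_equal; ring ].
Qed.

Lemma abs_complete_square (a b c k m n : Z) : qform a b c m n = k ->
  Z.abs (2*c*n + b*m) * Z.abs (2*c*n + b*m) - qdisc a b c * (Z.abs m * Z.abs m) = 4*c*k.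
Proof. intro Hq. rewrite !Z.abs_square, <- Hq. apply qform_complete_square. Qed.

(* With y = 2cn + bm we have y^2 - D m^2 = 4ck, so both points (|m|, |y|) lie
   near the same asymptote |y| = sqrt(D) |m| and pell_cross_bound applies. *)
Lemma det_lt_of_close (a b c k m1 n1 m2 n2 : Z) :
  5 <= qdisc a b c -> c <> 0 -> k <> 0 ->
  qform a b c m1 n1 = k -> qform a b c m2 n2 = k ->
  (0 <? m1) = (0 <? m2) -> (0 <=? 2*c*n1 + b*m1) = (0 <=? 2*c*n2 + b*m2) ->
  10 * Z.abs m1 < 11 * Z.abs m2 -> 10 * Z.abs m2 < 11 * Z.abs m1 ->
  Z.abs (m1*n2 - n1*m2) < Z.abs k.
Proof.
  intros HD Hc Hk Hq1 Hq2 Sm Sy R1 R2.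
  pose proof (pell_cross_bound_Z (qdisc a b c) (4*c*k) (Z.abs m1) (Z.abs m2)
    (Z.abs (2*c*n1 + b*m1)) (Z.abs (2*c*n2 + b*m2)) ltac:(lia) ltac:(lia) ltac:(lia)
    ltac:(lia) ltac:(lia) (abs_complete_square a b c k m1 n1 Hq1)
    (abs_complete_square a b c k m2 n2 Hq2) R1 R2) as B.
  rewrite Zabs_cross_same_sign in B by assumption.
  replace (m1 * (2*c*n2 + b*m2) - m2 * (2*c*n1 + b*m1)) with (2*c*(m1*n2 - n1*m2)) in B
    by ring.
  rewrite !Z.abs_mul, !mult_IZR in B. change (Z.abs 2) with 2 in B. change (Z.abs 4) with 4 in B.
  set (s := sqrt (IZR (qdisc a b c))) in B.
  assert (Hs : (0 < s)%R) by (apply sqrt_lt_R0, IZR_lt; lia).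
  assert (H5 : (5 <= s * s)%R) by (unfold s; rewrite sqrt_sqrt; apply IZR_le; lia).
  assert (Hc' : (0 < IZR (Z.abs c))%R) by (apply IZR_lt; lia).
  assert (Hk' : (1 <= IZR (Z.abs k))%R) by (apply IZR_le; lia).
  assert (Hd : (0 <= IZR (Z.abs (m1*n2 - n1*m2)))%R) by (apply IZR_le; lia).
  set (d := IZR (Z.abs (m1*n2 - n1*m2))) in *. set (kk := IZR (Z.abs k)) in *.
  set (cc := IZR (Z.abs c)) in *.
  assert (B' : (5 * s * d <= 11 * kk)%R) by (apply Rmult_le_reg_l with (4 * cc)%R; lra).
  apply lt_IZR. fold d kk. destruct (Rlt_le_dec d kk) as [h|h]; [exact h | exfalso].
  assert (Hs11 : (5 * s <= 11)%R) by nra.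
  nra.
Qed.

(* For K > 0 the gap W = Y2^2 - Y1^2 = D (M2^2 - M1^2) has W^2 >= 4K >= 16|k|,
   while W^2 <= D^2 M2^4 < |k|; for K < 0 already D M2^2 >= |K| >= 4|k|. *)
Lemma pell_small_unique (D K k M1 M2 Y1 Y2 : Z) : 1 <= D -> 4 * Z.abs k <= Z.abs K ->
  0 < M1 -> 0 < M2 -> 0 <= Y1 -> 0 <= Y2 ->
  Y1*Y1 - D*(M1*M1) = K -> Y2*Y2 - D*(M2*M2) = K ->
  D*D*(M1*M1*(M1*M1)) < Z.abs k -> D*D*(M2*M2*(M2*M2)) < Z.abs k -> M1 <= M2 -> M1 = M2.
Proof.
  intros HD HkK H1 H2 HY1 HY2 E1 E2 S1 S2 Hle.
  destruct (Z.eq_dec M1 M2) as [e|ne]; [exact e|exfalso].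
  assert (Hsq : M1*M1 < M2*M2) by nia.
  destruct (Z_lt_le_dec 0 K) as [Kp|Kn].
  - assert (Hy : Y1 < Y2) by nia.
    set (W := Y2*Y2 - Y1*Y1).
    assert (HW : W = D*(M2*M2 - M1*M1)) by (unfold W; lia).
    assert (HW1 : 2*Y1 + 1 <= W) by (unfold W; nia).
    assert (HY1K : K <= Y1*Y1) by nia.
    assert (HWW : 4*K <= W*W) by nia.
    assert (HW2 : W*W <= D*D*(M2*M2*(M2*M2))).
    { rewrite HW. assert (0 <= M2*M2 - M1*M1 <= M2*M2) by nia. nia. }
    lia.
  - assert (HX : 4 * Z.abs k <= D*(M2*M2)) by nia.
    replace (D*D*(M2*M2*(M2*M2))) with ((D*(M2*M2)) * (D*(M2*M2))) in S2 by ring.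
    nia.
Qed.

Definition sign_key (b c : Z) (p : Z * Z) : bool * bool :=
  (0 <? fst p, 0 <=? 2 * c * snd p + b * fst p).

Lemma small_reps_length_le (a b c k : Z) : 5 <= qdisc a b c -> c <> 0 ->
  forall L, NoDup L ->
  (forall p, In p L -> A_set a b c k p /\
     qdisc a b c * qdisc a b c * (fst p * fst p * (fst p * fst p)) < Z.abs k) ->
  (length L <= 4)%nat.
Proof.
  intros HD Hc L ND HL.
  rewrite <- (length_map (sign_key b c)).
  change 4%nat with (length [(true, true); (true, false); (false, true); (false, false)]).
  apply NoDup_incl_length; [|intros [[|] [|]] _; simpl; tauto].
  apply NoDup_map_NoDup_ForallPairs; [|exact ND].
  intros [m1 n1] [m2 n2] I1 I2 E.
  assert (Sm : (0 <? m1) = (0 <? m2)) by exact (f_equal fst E).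
  assert (Sy : (0 <=? 2*c*n1 + b*m1) = (0 <=? 2*c*n2 + b*m2)) by exact (f_equal snd E).
  destruct (HL _ I1) as [[Hm1 Hq1] S1], (HL _ I2) as [[Hm2 Hq2] S2]. cbn [fst snd] in *.
  pose proof (abs_complete_square a b c k m1 n1 Hq1) as Y1.
  pose proof (abs_complete_square a b c k m2 n2 Hq2) as Y2.
  rewrite <- (Z.abs_square m1) in S1. rewrite <- (Z.abs_square m2) in S2.
  assert (HkK : 4 * Z.abs k <= Z.abs (4*c*k)) by (rewrite !Z.abs_mul; nia).
  assert (Ha : Z.abs m1 = Z.abs m2).
  { destruct (Z.le_ge_cases (Z.abs m1) (Z.abs m2));
      [| symmetry]; eapply pell_small_unique; eauto; lia. }
  assert (Em : m1 = m2) by (destruct (Z.ltb_spec 0 m1), (Z.ltb_spec 0 m2); try discriminate; lia).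
  subst m2.
  assert (Ey : 2*c*n1 + b*m1 = 2*c*n2 + b*m1).
  { assert (Z.abs (2*c*n1 + b*m1) = Z.abs (2*c*n2 + b*m1)) by nia.
    destruct (Z.leb_spec 0 (2*c*n1 + b*m1)), (Z.leb_spec 0 (2*c*n2 + b*m1)); try discriminate; lia. }
  f_equal. nia.
Qed.

(** * Counting representations in a range *)

Lemma primitive_det0_eq (m1 n1 m2 n2 : Z) : Z.gcd m1 n1 = 1 -> Z.gcd m2 n2 = 1 ->
  m1 <> 0 -> (0 <? m1) = (0 <? m2) -> m1*n2 - n1*m2 = 0 -> m1 = m2 /\ n1 = n2.
Proof.
  intros G1 G2 H1 S E.
  assert (D1 : (m1 | m2)) by (apply Z.gauss with n1; [exists n2; lia | exact G1]).
  assert (D2 : (m2 | m1)) by (apply Z.gauss with n2; [exists n1; lia | exact G2]).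
  pose proof (Z.divide_antisym_abs _ _ D1 D2).
  assert (Em : m1 = m2) by (destruct (Z.ltb_spec 0 m1), (Z.ltb_spec 0 m2); try discriminate; lia).
  subst m2. split; [reflexivity|]. apply Z.mul_reg_l with m1; [exact H1 | lia].
Qed.

Lemma ltb0_mul_pos_l (g x : Z) : 0 < g -> (0 <? g * x) = (0 <? x).
Proof.
  intro Hg. destruct (Z.ltb_spec 0 x).
  - apply Z.ltb_lt. now apply Z.mul_pos_pos.
  - apply Z.ltb_ge. apply Z.mul_nonneg_nonpos; lia.
Qed.

Lemma scaled_dvd_eq0 (g k d : Z) : 0 < g -> (k | d) ->
  Z.abs (g * g * d) < Z.abs (g * g * k) -> d = 0.
Proof.
  intros Hg [z ->] H. rewrite !Z.abs_mul, (Z.abs_eq g) in H by lia.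
  assert (Z.abs z = 0) by nia. lia.
Qed.

Definition rep_key (a b c : Z) (p : Z * Z) : bool * bool * Z * (Z * Z) :=
  let g := Z.gcd (fst p) (snd p) in
  (0 <? fst p, 0 <=? 2 * c * snd p + b * fst p, g,
   root_code a b c (fst p / g) (snd p / g)).

Definition zrange (n : Z) : list Z := map Z.of_nat (seq 0 (Z.to_nat n)).

Lemma in_zrange (x n : Z) : 0 <= x < n -> In x (zrange n).
Proof.
  intro H. unfold zrange. apply in_map_iff. exists (Z.to_nat x). split; [lia|].
  apply in_seq. lia.
Qed.

Definition key_range (a b c k : Z) : list (bool * bool * Z * (Z * Z)) :=
  list_prod (list_prod (list_prod [true; false] [true; false]) (Zdivisors (Z.abs k)))
    (list_prod (Zdivisors (4 * Z.abs k)) (zrange (Z.sqrt (4 * qdisc a b c)))).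

Lemma length_key_range (a b c k : Z) : length (key_range a b c k) =
  (4 * length (Zdivisors (Z.abs k)) *
   (length (Zdivisors (4 * Z.abs k)) * Z.to_nat (Z.sqrt (4 * qdisc a b c))))%nat.
Proof. unfold key_range, zrange. rewrite !length_prod, length_map, length_seq. simpl. lia. Qed.

Lemma rep_key_in_range (a b c k m n : Z) : 0 < qdisc a b c -> k <> 0 -> m <> 0 ->
  qform a b c m n = k -> In (rep_key a b c (m, n)) (key_range a b c k).
Proof.
  intros HD Hk Hm Hq. unfold rep_key, key_range. cbn [fst snd].
  pose proof (qform_gcd_factor a b c m n Hm) as Ek. rewrite Hq in Ek.
  pose proof (gcd_pos_l m n Hm) as Hg.
  set (g := Z.gcd m n) in *.
  assert (Hk' : qform a b c (m / g) (n / g) <> 0) by (intro E; rewrite E in Ek; lia).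
  pose proof (coprime_div_gcd m n Hm) as G.
  destruct (root_code_range a b c (m / g) (n / g) HD G Hk') as (H1 & H2 & H3).
  destruct (root_code a b c (m / g) (n / g)) as [g' i]. cbn [fst snd] in *.
  repeat apply in_prod.
  - destruct (0 <? m); simpl; tauto.
  - destruct (0 <=? 2 * c * n + b * m); simpl; tauto.
  - apply in_Zdivisors; [lia | lia|]. apply Z.divide_abs_r.
    exists (g * qform a b c (m / g) (n / g)). rewrite Ek. ring.
  - apply in_Zdivisors; [lia | lia|]. apply Z.divide_trans with (1 := H2).
    replace (4 * Z.abs k) with (Z.abs (4 * k)) by lia. apply Z.divide_abs_r.
    exists (g * g). rewrite Ek. ring.
  - now apply in_zrange.
Qed.

Lemma rep_key_inj (a b c k m1 n1 m2 n2 : Z) : Z.gcd (Z.gcd a b) c = 1 ->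
  5 <= qdisc a b c -> c <> 0 -> k <> 0 -> m1 <> 0 -> m2 <> 0 ->
  qform a b c m1 n1 = k -> qform a b c m2 n2 = k ->
  10 * Z.abs m1 < 11 * Z.abs m2 -> 10 * Z.abs m2 < 11 * Z.abs m1 ->
  rep_key a b c (m1, n1) = rep_key a b c (m2, n2) -> (m1, n1) = (m2, n2).
Proof.
  intros Hprim HD Hc Hk Hm1 Hm2 Hq1 Hq2 R1 R2 E.
  assert (Sm : (0 <? m1) = (0 <? m2)) by exact (f_equal (fun x => fst (fst (fst x))) E).
  assert (Sy : (0 <=? 2*c*n1 + b*m1) = (0 <=? 2*c*n2 + b*m2))
    by exact (f_equal (fun x => snd (fst (fst x))) E).
  assert (Eg : Z.gcd m1 n1 = Z.gcd m2 n2) by exact (f_equal (fun x => snd (fst x)) E).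
  assert (Ec := f_equal snd E). unfold rep_key in Ec. cbn [fst snd] in Ec.
  pose proof (det_lt_of_close a b c k m1 n1 m2 n2 HD Hc Hk Hq1 Hq2 Sm Sy R1 R2) as Hsmall.
  pose proof (qform_gcd_factor a b c m1 n1 Hm1) as Ek1.
  pose proof (qform_gcd_factor a b c m2 n2 Hm2) as Ek2.
  pose proof (gcd_div_mul_l m1 n1 Hm1) as Em1. pose proof (gcd_div_mul_r m1 n1 Hm1) as En1.
  pose proof (gcd_div_mul_l m2 n2 Hm2) as Em2. pose proof (gcd_div_mul_r m2 n2 Hm2) as En2.
  pose proof (coprime_div_gcd m1 n1 Hm1) as G1. pose proof (coprime_div_gcd m2 n2 Hm2) as G2.
  pose proof (gcd_pos_l m1 n1 Hm1) as Hg.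
  rewrite <- Eg in Ec, Ek2, Em2, En2, G2.
  set (g := Z.gcd m1 n1) in *.
  set (m1' := m1 / g) in *. set (n1' := n1 / g) in *.
  set (m2' := m2 / g) in *. set (n2' := n2 / g) in *.
  clearbody m1' n1' m2' n2'.
  assert (Ek : qform a b c m1' n1' = qform a b c m2' n2').
  { apply Z.mul_reg_l with (g * g); [nia | congruence]. }
  assert (Hk' : qform a b c m1' n1' <> 0)
    by (intro Z0; rewrite Z0, Z.mul_0_r in Ek1; congruence).
  pose proof (root_code_eq_det_dvd a b c m1' n1' m2' n2' Hprim G1 G2 Hk' Ek Ec) as Hdvd.
  assert (Hdet : m1'*n2' - n1'*m2' = 0).
  { apply (scaled_dvd_eq0 g _ _ Hg Hdvd). rewrite <- Ek1, Hq1.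
    replace (g * g * (m1' * n2' - n1' * m2')) with (m1 * n2 - n1 * m2)
      by (rewrite Em1, En1, Em2, En2; ring).
    exact Hsmall. }
  assert (S' : (0 <? m1') = (0 <? m2'))
    by (rewrite Em1, Em2, !ltb0_mul_pos_l in Sm by exact Hg; exact Sm).
  assert (Hm1' : m1' <> 0) by (intro Z0; rewrite Z0, Z.mul_0_r in Em1; contradiction).
  destruct (primitive_det0_eq m1' n1' m2' n2' G1 G2 Hm1' S' Hdet) as [-> ->].
  rewrite Em1, En1, Em2, En2. reflexivity.
Qed.

Lemma range_reps_length_le (a b c k : Z) (R : R) : Z.gcd (Z.gcd a b) c = 1 ->
  5 <= qdisc a b c -> c <> 0 -> k <> 0 -> (0 < R)%R -> forall L, NoDup L ->
  (forall p, In p L -> A_set a b c k p /\ (R <= IZR (Z.abs (fst p)) < 11/10 * R)%R) ->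
  (length L <= length (key_range a b c k))%nat.
Proof.
  intros Hprim HD Hc Hk HR L ND HL.
  rewrite <- (length_map (rep_key a b c)).
  apply NoDup_incl_length.
  - apply NoDup_map_NoDup_ForallPairs; [|exact ND].
    intros [m1 n1] [m2 n2] I1 I2.
    destruct (HL _ I1) as [[Hm1 Hq1] [Ra1 Rb1]], (HL _ I2) as [[Hm2 Hq2] [Ra2 Rb2]].
    cbn [fst snd] in *.
    apply (rep_key_inj a b c k); try assumption;
      apply lt_IZR; rewrite !mult_IZR; lra.
  - intros x Hx. apply in_map_iff in Hx as [[m n] [<- Hin]].
    destruct (HL _ Hin) as [[Hm Hq] _].
    apply rep_key_in_range; [lia | assumption..].
Qed.

(** * Sums over geometric ranges *)

Open Scope R_scope.

Lemma list_sum_filter (f : Z * Z -> R) (P : Z * Z -> bool) (L : list (Z * Z)) :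
  Defs.list_sum f L
  = Defs.list_sum f (filter P L) + Defs.list_sum f (filter (fun x => negb (P x)) L).
Proof. induction L as [|x l IH]; simpl; [lra|]. destruct (P x); simpl; rewrite IH; lra. Qed.

Lemma list_sum_le_length_mul (f : Z * Z -> R) (L : list (Z * Z)) (B : R) :
  (forall p, In p L -> f p <= B) -> Defs.list_sum f L <= INR (length L) * B.
Proof.
  induction L as [|x l IH]; intro H; [simpl; lra|].
  cbn [Defs.list_sum fold_right length]. rewrite S_INR.
  assert (f x <= B) by (apply H; left; reflexivity).
  assert (Defs.list_sum f l <= INR (length l) * B) by (apply IH; intros; apply H; right; assumption).
  unfold Defs.list_sum in *. lra.
Qed.

Lemma Rpower_pos (x y : R) : 0 < Rpower x y.
Proof. apply exp_pos. Qed.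

Lemma Rpower_ge1 (x y : R) : 1 <= x -> 0 <= y -> 1 <= Rpower x y.
Proof. intros Hx Hy. rewrite <- (Rpower_O x) by lra. now apply Rle_Rpower. Qed.

Lemma Rpower_gt1 (x y : R) : 1 < x -> 0 < y -> 1 < Rpower x y.
Proof. intros Hx Hy. rewrite <- (Rpower_O x) by lra. now apply Rpower_lt. Qed.

Lemma Rpower_pow_l (x y : R) (M : nat) : 0 < x -> Rpower (x ^ M) y = Rpower x y ^ M.
Proof.
  intro Hx. rewrite <- (Rpower_pow M x Hx), Rpower_mult, <- Rpower_pow by apply Rpower_pos.
  rewrite Rpower_mult. f_equal. ring.
Qed.

Lemma exists_geom_bound (L : list (Z * Z)) (X0 rho : R) : 0 < X0 -> 1 < rho ->
  exists M : nat, forall p, In p L -> IZR (Z.abs (fst p)) < X0 * rho ^ M.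
Proof.
  intros HX Hr. induction L as [|x l [M1 HM1]]; [exists 0%nat; intros p []|].
  destruct (Pow_x_infinity rho ltac:(rewrite Rabs_right; lra) (IZR (Z.abs (fst x)) / X0 + 1))
    as [M2 HM2].
  exists (Nat.max M1 M2). intros p [<-|Hp].
  - specialize (HM2 (Nat.max M1 M2) ltac:(lia)).
    rewrite Rabs_right in HM2 by (apply Rle_ge, pow_le; lra).
    apply Rmult_lt_reg_l with (/ X0); [now apply Rinv_0_lt_compat|].
    rewrite <- Rmult_assoc, Rinv_l, Rmult_1_l by lra. unfold Rdiv in HM2. lra.
  - apply Rlt_le_trans with (X0 * rho ^ M1); [now apply HM1|].
    apply Rmult_le_compat_l; [lra|]. apply Rle_pow; [lra | lia].
Qed.

Section GeometricRanges.

Variables (P : Z * Z -> Prop) (lam X0 : R) (N : nat).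
Hypothesis lam_pos : 0 < lam.
Hypothesis X0_pos : 0 < X0.
Hypothesis range_count : forall R, X0 <= R -> forall L, NoDup L ->
  (forall p, In p L -> P p /\ R <= IZR (Z.abs (fst p)) < 11/10 * R) -> (length L <= N)%nat.

Let f (p : Z * Z) : R := / Rpower (IZR (Z.abs (fst p))) lam.
Let r : R := / Rpower (11/10) lam.

Let r_pos : 0 < r.
Proof. apply Rinv_0_lt_compat, Rpower_pos. Qed.

Let r_lt1 : r < 1.
Proof.
  unfold r. rewrite <- Rinv_1. apply Rinv_lt_contravar; [rewrite Rmult_1_l; apply Rpower_pos|].
  apply Rpower_gt1; lra.
Qed.

Lemma inv_Rpower_le_geom (x : R) (M : nat) : X0 * (11/10) ^ M <= x ->
  / Rpower x lam <= / Rpower X0 lam * r ^ M.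
Proof.
  intro Hx. unfold r. rewrite pow_inv, <- Rpower_pow_l, <- Rinv_mult, Rpower_mult_distr
    by (try apply pow_lt; lra).
  apply Rinv_le_contravar; [apply Rpower_pos|].
  apply Rle_Rpower_l; [lra|]. split; [|exact Hx].
  apply Rmult_lt_0_compat; [lra | apply pow_lt; lra].
Qed.

(* The M-th range [X0 (11/10)^M, X0 (11/10)^(M+1)) contributes at most
   N (X0 (11/10)^M)^-lam = N X0^-lam r^M. *)
Lemma sum_first_ranges_le (M : nat) (L : list (Z * Z)) : NoDup L ->
  (forall p, In p L -> P p /\ X0 <= IZR (Z.abs (fst p)) < X0 * (11/10) ^ M) ->
  Defs.list_sum f L <= INR N * / Rpower X0 lam * ((1 - r ^ M) / (1 - r)).
Proof.
  revert L. induction M as [|M IH]; intros L ND HL.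
  - destruct L as [|x l]; [simpl; lra|].
    destruct (HL x (or_introl eq_refl)) as [_ H]. simpl in H. lra.
  - set (low := fun p : Z * Z =>
      if Rlt_dec (IZR (Z.abs (fst p))) (X0 * (11/10) ^ M) then true else false).
    set (high := filter (fun p => negb (low p)) L).
    assert (Hhigh : forall p, In p high ->
              P p /\ X0 * (11/10) ^ M <= IZR (Z.abs (fst p)) < 11/10 * (X0 * (11/10) ^ M)).
    { intros p Hp. apply filter_In in Hp as [Hp Hb]. destruct (HL p Hp) as [HP Hr].
      unfold low in Hb. destruct Rlt_dec as [_|Hge]; [discriminate|].
      rewrite <- tech_pow_Rmult in Hr. apply Rnot_lt_le in Hge. split; [exact HP | lra]. }
    rewrite (list_sum_filter f low L).
    assert (Hlow : Defs.list_sum f (filter low L)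
                   <= INR N * / Rpower X0 lam * ((1 - r ^ M) / (1 - r))).
    { apply IH; [now apply NoDup_filter|]. intros p Hp. apply filter_In in Hp as [Hp Hb].
      destruct (HL p Hp) as [HP Hr]. unfold low in Hb. destruct Rlt_dec; [|discriminate].
      split; [exact HP | lra]. }
    assert (HRM : X0 <= X0 * (11/10) ^ M).
    { rewrite <- (Rmult_1_r X0) at 1. apply Rmult_le_compat_l; [lra|].
      apply pow_R1_Rle. lra. }
    assert (Hlen : (length high <= N)%nat)
      by (apply (range_count _ HRM); [now apply NoDup_filter | exact Hhigh]).
    assert (Hf : forall p, In p high -> f p <= / Rpower X0 lam * r ^ M)
      by (intros p Hp; apply inv_Rpower_le_geom, Hhigh, Hp).
    pose proof (list_sum_le_length_mul f high _ Hf) as Hsum.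
    assert (INR (length high) * (/ Rpower X0 lam * r ^ M)
            <= INR N * (/ Rpower X0 lam * r ^ M)).
    { apply Rmult_le_compat_r; [|now apply le_INR].
      apply Rmult_le_pos; [apply Rlt_le, Rinv_0_lt_compat, Rpower_pos | apply pow_le; lra]. }
    assert (INR N * / Rpower X0 lam * ((1 - r ^ M) / (1 - r)) + INR N * (/ Rpower X0 lam * r ^ M)
            = INR N * / Rpower X0 lam * ((1 - r ^ S M) / (1 - r)))
      by (cbn [pow]; field; split; apply Rgt_not_eq; [lra | apply Rpower_pos]).
    fold high. lra.
Qed.

Lemma sum_ranges_le (L : list (Z * Z)) : NoDup L ->
  (forall p, In p L -> P p /\ X0 <= IZR (Z.abs (fst p))) ->
  Defs.list_sum f L <= INR N * / Rpower X0 lam * / (1 - r).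
Proof.
  intros ND HL.
  destruct (exists_geom_bound L X0 (11/10) X0_pos ltac:(lra)) as [M HM].
  apply Rle_trans with (INR N * / Rpower X0 lam * ((1 - r ^ M) / (1 - r))).
  - apply (sum_first_ranges_le M L ND). intros p Hp. destruct (HL p Hp). auto.
  - apply Rmult_le_compat_l.
    + apply Rmult_le_pos; [apply pos_INR | apply Rlt_le, Rinv_0_lt_compat, Rpower_pos].
    + assert (0 <= r ^ M) by (apply pow_le; lra).
      unfold Rdiv. rewrite <- (Rmult_1_l (/ (1 - r))) at 2.
      apply Rmult_le_compat_r; [apply Rlt_le, Rinv_0_lt_compat|]; lra.
Qed.

End GeometricRanges.

Lemma Rpower_quarter_pow4 (x : R) : 0 < x -> Rpower (x ^ 4) (/ 4) = x.
Proof.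
  intro Hx. rewrite <- (Rpower_pow 4 x Hx), Rpower_mult.
  replace (INR 4 * / 4) with 1 by (simpl; field). now apply Rpower_1.
Qed.

Lemma fourth_root_le (D K m : Z) : (0 < D)%Z -> (0 < K)%Z -> m <> 0%Z ->
  (K <= D * D * (m * m * (m * m)))%Z ->
  Rpower (IZR K / (IZR D * IZR D)) (/ 4) <= IZR (Z.abs m).
Proof.
  intros HD HK Hm Hle.
  assert (HD0 : 0 < IZR D) by (apply IZR_lt; lia).
  rewrite <- (Rpower_quarter_pow4 (IZR (Z.abs m))) by (apply IZR_lt; lia).
  apply Rle_Rpower_l; [lra|]. split.
  - apply Rdiv_lt_0_compat; [apply IZR_lt; lia | nra].
  - apply Rmult_le_reg_r with (IZR D * IZR D); [nra|].
    unfold Rdiv. rewrite Rmult_assoc, Rinv_l, Rmult_1_r by nra.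
    rewrite <- !mult_IZR, pow_IZR, <- mult_IZR. apply IZR_le.
    change (Z.of_nat 4) with 4%Z.
    replace (Z.abs m ^ 4)%Z with (Z.abs m * Z.abs m * (Z.abs m * Z.abs m))%Z by ring.
    rewrite Z.abs_square. lia.
Qed.

(* Representations with D^2 m^4 < |k| are handled by small_reps_length_le;
   the others have |m| >= (|k| / D^2)^(1/4) and are counted range by range. *)
Lemma primitive_sum_le (a b c k : Z) (lam : R) : 0 < lam -> Z.gcd (Z.gcd a b) c = 1%Z ->
  (5 <= qdisc a b c)%Z -> c <> 0%Z -> k <> 0%Z ->
  forall L, NoDup L -> Forall (A_set a b c k) L ->
  Defs.list_sum (fun p => / Rpower (IZR (Z.abs (fst p))) lam) L <=
    4 + INR (length (key_range a b c k))
        * / Rpower (Rpower (IZR (Z.abs k) / (IZR (qdisc a b c) * IZR (qdisc a b c))) (/ 4)) lam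
        * / (1 - / Rpower (11/10) lam).
Proof.
  intros Hl Hprim HD Hc Hk L ND HF. rewrite Forall_forall in HF.
  set (D := qdisc a b c) in *.
  set (small := fun p : Z * Z => (D * D * (fst p * fst p * (fst p * fst p)) <? Z.abs k)%Z).
  rewrite (list_sum_filter _ small L).
  set (X0 := Rpower (IZR (Z.abs k) / (IZR D * IZR D)) (/ 4)).
  assert (HX0 : 0 < X0) by apply Rpower_pos.
  assert (Small : Defs.list_sum (fun p => / Rpower (IZR (Z.abs (fst p))) lam) (filter small L) <= 4).
  { apply Rle_trans with (INR (length (filter small L)) * 1).
    - apply list_sum_le_length_mul. intros p Hp. apply filter_In in Hp as [Hp _].
      destruct (HF p Hp) as [Hm _].
      rewrite <- Rinv_1. apply Rinv_le_contravar; [lra|].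
      apply Rpower_ge1; [apply IZR_le; lia | lra].
    - rewrite Rmult_1_r. replace 4 with (INR 4) by (simpl; lra). apply le_INR.
      apply (small_reps_length_le a b c k HD Hc); [now apply NoDup_filter|].
      intros p Hp. apply filter_In in Hp as [Hp Hb].
      split; [now apply HF | now apply Z.ltb_lt]. }
  assert (Large : Defs.list_sum (fun p => / Rpower (IZR (Z.abs (fst p))) lam)
                    (filter (fun p => negb (small p)) L)
     <= INR (length (key_range a b c k)) * / Rpower X0 lam * / (1 - / Rpower (11/10) lam)).
  { apply (sum_ranges_le (A_set a b c k)); [exact Hl | exact HX0 | | now apply NoDup_filter |].
    - intros R HR. apply (range_reps_length_le a b c k R); [assumption.. | lra].
    - intros p Hp. apply filter_In in Hp as [Hp Hb].
      split; [now apply HF|]. destruct (HF p Hp) as [Hm _].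
      unfold small in Hb. apply Bool.negb_true_iff, Z.ltb_ge in Hb.
      apply fourth_root_le; lia. }
  lra.
Qed.

Lemma INR_Zsqrt_mul4_le (D : Z) : (0 <= D)%Z -> INR (Z.to_nat (Z.sqrt (4 * D))) <= 2 * sqrt (IZR D).
Proof.
  intro HD. rewrite INR_IZR_INZ, Z2Nat.id by apply Z.sqrt_nonneg.
  assert (Hs : (Z.sqrt (4 * D) * Z.sqrt (4 * D) <= 4 * D)%Z) by (apply Z.sqrt_spec; lia).
  rewrite <- (sqrt_square (IZR (Z.sqrt (4 * D)))) by (apply IZR_le, Z.sqrt_nonneg).
  replace (2 * sqrt (IZR D)) with (sqrt (IZR (4 * D))).
  - apply sqrt_le_1_alt. rewrite <- mult_IZR. now apply IZR_le.
  - rewrite mult_IZR, sqrt_mult by (lra || now apply IZR_le).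
    replace (IZR 4) with (2 * 2) by lra. rewrite sqrt_square by lra. reflexivity.
Qed.

Lemma key_weight_identity (K D lam : R) : 1 <= K -> 1 <= D ->
  Rpower K (lam/8) * Rpower (4*K) (lam/8) * sqrt D * / Rpower (Rpower (K / (D*D)) (/4)) lam
  = Rpower 4 (lam/8) * Rpower D ((1+lam)/2).
Proof.
  intros HK HD. rewrite <- Rpower_sqrt, Rpower_mult by lra.
  unfold Rpower. rewrite ln_mult by lra. unfold Rdiv at 3.
  rewrite ln_mult, ln_Rinv, ln_mult by (try apply Rinv_0_lt_compat; nra).
  rewrite <- exp_Ropp, <- !exp_plus. f_equal. field.
Qed.

Lemma key_range_weight_le (a b c k : Z) (lam C : R) : 0 < lam -> 1 <= C ->
  (1 <= qdisc a b c)%Z -> k <> 0%Z ->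
  (forall n, (0 < n)%Z -> INR (length (Zdivisors n)) <= C * Rpower (IZR n) (lam/8)) ->
  INR (length (key_range a b c k))
    * / Rpower (Rpower (IZR (Z.abs k) / (IZR (qdisc a b c) * IZR (qdisc a b c))) (/ 4)) lam
  <= 8 * C * C * Rpower 4 (lam/8) * Rpower (IZR (qdisc a b c)) ((1+lam)/2).
Proof.
  intros Hl HC HD Hk Hdiv.
  set (D := qdisc a b c) in *.
  assert (HK1 : 1 <= IZR (Z.abs k)) by (apply IZR_le; lia).
  assert (HD1 : 1 <= IZR D) by (apply IZR_le; lia).
  pose proof (Hdiv (Z.abs k) ltac:(lia)) as H1.
  pose proof (Hdiv (4 * Z.abs k)%Z ltac:(lia)) as H2. rewrite mult_IZR in H2.
  pose proof (INR_Zsqrt_mul4_le D ltac:(lia)) as H3.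
  pose proof (key_weight_identity _ _ lam HK1 HD1) as E.
  set (W := / Rpower (Rpower (IZR (Z.abs k) / (IZR D * IZR D)) (/ 4)) lam) in *.
  assert (HW : 0 < W) by (apply Rinv_0_lt_compat, Rpower_pos).
  rewrite length_key_range, !mult_INR. replace (INR 4) with 4 by (simpl; lra).
  apply Rle_trans with
    (4 * (C * Rpower (IZR (Z.abs k)) (lam/8)) * ((C * Rpower (4 * IZR (Z.abs k)) (lam/8))
     * (2 * sqrt (IZR D))) * W).
  - apply Rmult_le_compat_r; [lra|].
    pose proof (pos_INR (length (Zdivisors (Z.abs k)))).
    pose proof (pos_INR (length (Zdivisors (4 * Z.abs k)))).
    pose proof (pos_INR (Z.to_nat (Z.sqrt (4 * D)))).
    apply Rmult_le_compat; [nra | apply Rmult_le_pos; apply pos_INR | lra |].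
    apply Rmult_le_compat; assumption.
  - right. transitivity (8 * C * C * (Rpower 4 (lam/8) * Rpower (IZR D) ((1+lam)/2))); [|ring].
    rewrite <- E. ring.
Qed.

Definition sum_constant (lam C : R) : R :=
  4 + 8 * C * C * Rpower 4 (lam/8) * / (1 - / Rpower (11/10) lam).

Lemma geometric_factor_pos (lam : R) : 0 < lam -> 0 < / (1 - / Rpower (11/10) lam).
Proof.
  intro Hl. apply Rinv_0_lt_compat.
  assert (/ Rpower (11/10) lam < 1); [|lra].
  rewrite <- Rinv_1. apply Rinv_lt_contravar; [rewrite Rmult_1_l; apply Rpower_pos|].
  apply Rpower_gt1; lra.
Qed.

Lemma sum_constant_pos (lam C : R) : 0 < lam -> 0 < sum_constant lam C.
Proof.
  intro Hl. unfold sum_constant. pose proof (geometric_factor_pos lam Hl).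
  pose proof (Rpower_pos 4 (lam/8)). assert (0 <= 8 * C * C) by nra.
  assert (0 <= 8 * C * C * Rpower 4 (lam/8) * / (1 - / Rpower (11/10) lam))
    by (apply Rmult_le_pos; [apply Rmult_le_pos|]; lra).
  lra.
Qed.

Lemma primitive_sum_le_constant (a b c k : Z) (lam C : R) : 0 < lam -> 1 <= C ->
  (forall n, (0 < n)%Z -> INR (length (Zdivisors n)) <= C * Rpower (IZR n) (lam/8)) ->
  Z.gcd (Z.gcd a b) c = 1%Z -> (5 <= qdisc a b c)%Z -> c <> 0%Z -> k <> 0%Z ->
  forall L, NoDup L -> Forall (A_set a b c k) L ->
  Defs.list_sum (fun p => / Rpower (IZR (Z.abs (fst p))) lam) L
  <= sum_constant lam C * Rpower (IZR (qdisc a b c)) ((1+lam)/2).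
Proof.
  intros Hl HC Hdiv Hprim HD Hc Hk L ND HF.
  eapply Rle_trans; [now apply (primitive_sum_le a b c k)|].
  pose proof (key_range_weight_le a b c k lam C Hl HC ltac:(lia) Hk Hdiv) as Hw.
  pose proof (geometric_factor_pos lam Hl) as HB.
  assert (HP : 1 <= Rpower (IZR (qdisc a b c)) ((1+lam)/2))
    by (apply Rpower_ge1; [apply IZR_le; lia | lra]).
  unfold sum_constant. set (B := / (1 - / Rpower (11/10) lam)) in *.
  assert (Hw' : INR (length (key_range a b c k))
      * / Rpower (Rpower (IZR (Z.abs k) / (IZR (qdisc a b c) * IZR (qdisc a b c))) (/ 4)) lam * B
    <= 8 * C * C * Rpower 4 (lam/8) * Rpower (IZR (qdisc a b c)) ((1+lam)/2) * B)
    by (apply Rmult_le_compat_r; lra).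
  nra.
Qed.

Theorem mainTheorem7 (lam : R) (Hlam : 0 < lam) :
  exists C : R,
    forall a b c : Z,
      Z.lt 0 (qdisc a b c) ->
      ~ (exists r : Z, (r * r)%Z = qdisc a b c) ->
      forall k : Z,
        nonneg_sum_le (A_set a b c k)
          (fun p => / Rpower (IZR (Z.abs (fst p))) lam)
          (C * Rpower (IZR (qdisc a b c)) ((1 + lam) / 2)).
Proof.
  destruct (Zdivisors_length_le (lam/8) ltac:(lra)) as (C & HC & Hdiv).
  exists (sum_constant lam C). intros a b c HD HN k L ND HF.
  destruct (primitive_part a b c ltac:(lia)) as (g & a0 & b0 & c0 & Hg & Hprim & Hscale & ED).
  assert (HN0 : ~ (exists r, (r * r)%Z = qdisc a0 b0 c0))
    by (intros [r Hr]; apply HN; exists (g * r)%Z; rewrite ED, <- Hr; ring).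
  assert (HD0 : (0 < qdisc a0 b0 c0)%Z) by nia.
  destruct (reps_of_primitive_part a b c a0 b0 c0 g k L ltac:(lia) Hscale HN0 HF)
    as [-> | (k0 & Hk0 & HF0)].
  - apply Rmult_le_pos; [apply Rlt_le, sum_constant_pos, Hlam | apply Rlt_le, Rpower_pos].
  - eapply Rle_trans.
    + apply (primitive_sum_le_constant a0 b0 c0 k0 lam C Hlam HC Hdiv Hprim
               (qdisc_nonsquare_ge5 a0 b0 c0 HD0 HN0) (qdisc_nonsquare_c_neq0 a0 b0 c0 HN0) Hk0 L ND HF0).
    + apply Rmult_le_compat_l; [apply Rlt_le, sum_constant_pos, Hlam|].
      apply Rle_Rpower_l; [lra|]. split; [apply IZR_lt; lia | apply IZR_le].
      rewrite ED. assert (1 <= g * g)%Z by nia. nia.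
Qed.
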